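(* Let $m\ge 2$. Let $X_1,\dots,X_m\in\mathbb{C}^n$ with $X_i=(x_{i,1},\dots,x_{i,n})$, and let $\alpha_1,\dots,\alpha_m\in\mathbb{Z}_{\ge0}^n$ with $\alpha_j=(\alpha_{j,1},\dots,\alpha_{j,n})$. Put $X_i^{\alpha_j}=x_{i,1}^{\alpha_{j,1}}x_{i,2}^{\alpha_{j,2}}\cdots x_{i,n}^{\alpha_{j,n}}$ and let $V_m=\det\big(X_i^{\alpha_j}\big)_{i,j=1}^m$ (row index $i$, column index $j$). Let $$M=\max_{i,j}|X_i^{\alpha_j}|,\qquad B=\max_{i,j,k}\Big\{|X_i^{\alpha_j}-X_i^{\alpha_k}|,\ |X_j^{\alpha_i}-X_k^{\alpha_i}|\Big\},$$ where all indices range over $1,\dots,m$. Then $|V_m|\le m!\,M^{m-1}B$.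
   Context: $V_m$ is called a generalized Vandermonde determinant. *)

From HB Require Import structures.
From mathcomp Require Import all_boot all_order all_algebra.
From mathcomp Require Import complex.
From mathcomp Require Import reals.
Set Implicit Arguments. Unset Strict Implicit. Unset Printing Implicit Defensive.
Import Order.TTheory GRing.Theory Num.Theory.
Local Open Scope ring_scope.

(* Complex numbers are R[i] = complex R over a real type R (e.g. the reals);
   |z| is the modulus `|z| (a nonnegative real element of R[i]);
   the maxima M, B are taken in R[i], where all compared values are real. *)

Definition mono (R : rcfType) (n : nat) (x : 'I_n -> R[i]) (a : 'I_n -> nat) : R[i] :=
  \prod_(k < n) x k ^+ a k.

Definition genVdet (R : rcfType) (m n : nat) (X : 'I_m -> 'I_n -> R[i])
  (alpha : 'I_m -> 'I_n -> nat) : R[i] :=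
  \det (\matrix_(i < m, j < m) mono (X i) (alpha j)).

(* M = max_{i,j} |X_i^{alpha_j}| (all quantities are >= 0, so 0 is a neutral start) *)
Definition Mbound (R : rcfType) (m n : nat) (X : 'I_m -> 'I_n -> R[i])
  (alpha : 'I_m -> 'I_n -> nat) : R[i] :=
  \big[Num.max/0]_(i < m) \big[Num.max/0]_(j < m) `|mono (X i) (alpha j)|.

Definition Bbound (R : rcfType) (m n : nat) (X : 'I_m -> 'I_n -> R[i])
  (alpha : 'I_m -> 'I_n -> nat) : R[i] :=
  \big[Num.max/0]_(i < m) \big[Num.max/0]_(j < m) \big[Num.max/0]_(k < m)
    Num.max (`|mono (X i) (alpha j) - mono (X i) (alpha k)|)
            `|mono (X j) (alpha i) - mono (X k) (alpha i)|.

From HB Require Import structures.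
From mathcomp Require Import all_boot all_order all_algebra.
From mathcomp Require Import complex.
From mathcomp Require Import reals.
From mathcomp Require Import perm.
Import Order.TTheory GRing.Theory Num.Theory.
Local Open Scope ring_scope.

(* Subtracting the column of alpha_0 from that of alpha_1 does not change V_m.
   In the Leibniz expansion of the new determinant each of the m! terms has
   exactly one factor from that column, of modulus at most B, and m - 1 other
   factors, of modulus at most M. *)

(* R[i] is only partially ordered, so the bigmax theory of total orders does
   not apply; realness of the compared values is enough. *)
Lemma real_le_maxl {T : numDomainType} {x y : T} :
  x \is Num.real -> y \is Num.real -> x <= Num.max x y.
Proof.
move=> xR yR; rewrite comparable_maxEge ?real_comparable //.
by case: (real_leP yR xR) => // /ltW.
Qed.

Lemma real_le_maxr {T : numDomainType} {x y : T} :
  x \is Num.real -> y \is Num.real -> y <= Num.max x y.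
Proof. by move=> xR yR; rewrite comparable_maxC ?real_comparable ?real_le_maxl. Qed.

Lemma real_le_bigmax {T : numDomainType} {I : eqType} {r : seq I} {x0 : T} {F : I -> T} {j} :
  x0 \is Num.real -> (forall i, F i \is Num.real) -> j \in r ->
  F j <= \big[Num.max/x0]_(i <- r) F i.
Proof.
move=> x0R FR; elim: r => // a r IHr; rewrite inE big_cons.
have restR : \big[Num.max/x0]_(i <- r) F i \is Num.real by exact: bigmax_real.
case/predU1P => [-> | /IHr jr]; first exact: real_le_maxl.
exact: le_trans jr (real_le_maxr (FR a) restR).
Qed.

Lemma det_sub_row {R : comRingType} {n} (A : 'M[R]_n) {i k : 'I_n} : k != i ->
  \det (\matrix_(r, c) if r == i then A i c - A k c else A r c) = \det A.
Proof.
move=> ki; set A' := \matrix_(r, c) _.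
pose C := \matrix_(r, c) if r == i then A k c else A r c.
have detC0 : \det C = 0.
  by apply: (determinant_alternate ki) => c; rewrite !mxE eqxx (negbTE ki).
rewrite (@determinant_multilinear _ _ A' A C i 1 (-1)).
- by rewrite detC0 mulr0 addr0 mul1r.
- by apply/rowP => c; rewrite !mxE eqxx mul1r mulN1r.
- by apply/matrixP => r c; rewrite !mxE eq_sym (negbTE (neq_lift _ _)).
- by apply/matrixP => r c; rewrite !mxE eq_sym (negbTE (neq_lift _ _)).
Qed.

Lemma norm_det_le {R : numDomainType} {n} (A : 'M[R]_n.+1) (i0 : 'I_n.+1) (M B : R) :
  (forall i j, i != i0 -> `|A i j| <= M) -> (forall j, `|A i0 j| <= B) ->
  `|\det A| <= n.+1`!%:R * M ^+ n * B.
Proof.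
move=> AM AB; have term_le (s : 'S_n.+1) : `|(-1) ^+ s * \prod_i A i (s i)| <= M ^+ n * B.
  rewrite normrM normrX normrN1 expr1n mul1r normr_prod (bigD1 i0) //= mulrC.
  apply: ler_pM; rewrite ?prodr_ge0 //.
  have -> : M ^+ n = \prod_(i | i != i0) M by rewrite prodr_const cardC1 card_ord.
  by apply: ler_prod => i i_neq0; rewrite normr_ge0 AM.
rewrite /determinant; apply: le_trans (ler_norm_sum _ _ _) _.
apply: le_trans (ler_sum _ (fun s _ => term_le s)) _.
by rewrite sumr_const card_Sn mulr_natl mulrnAl.
Qed.

Section Bounds.
Variables (R : rcfType) (m n : nat) (X : 'I_m -> 'I_n -> R[i]) (alpha : 'I_m -> 'I_n -> nat).

Lemma le_Mbound i j : `|mono (X i) (alpha j)| <= Mbound X alpha.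
Proof.
have rowR i' : \big[Num.max/0]_(j' < m) `|mono (X i') (alpha j')| \is Num.real.
  by apply: bigmax_real => // j' _; exact: normr_real.
apply: le_trans (real_le_bigmax (real0 _) rowR (mem_index_enum i)).
exact: real_le_bigmax (real0 _) (fun _ => normr_real _) (mem_index_enum j).
Qed.

Lemma le_Bbound i j k :
  `|mono (X i) (alpha j) - mono (X i) (alpha k)| <= Bbound X alpha.
Proof.
pose G i' j' k' := Num.max `|mono (X i') (alpha j') - mono (X i') (alpha k')|
                           `|mono (X j') (alpha i') - mono (X k') (alpha i')|.
have GR i' j' k' : G i' j' k' \is Num.real := max_real (normr_real _) (normr_real _).
have kR i' j' : \big[Num.max/0]_(k' < m) G i' j' k' \is Num.real by exact: bigmax_real.
have jkR i' : \big[Num.max/0]_(j' < m) \big[Num.max/0]_(k' < m) G i' j' k' \is Num.real.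
  by apply: bigmax_real => // j' _; exact: kR.
apply: le_trans (real_le_bigmax (real0 _) jkR (mem_index_enum i)).
apply: le_trans (real_le_bigmax (real0 _) (kR i) (mem_index_enum j)).
apply: le_trans (real_le_bigmax (real0 _) (GR i j) (mem_index_enum k)).
exact: real_le_maxl (normr_real _) (normr_real _).
Qed.

End Bounds.

Theorem theorem2 (R : realType) (m n : nat) (hm : (2 <= m)%N)
  (X : 'I_m -> 'I_n -> R[i]) (alpha : 'I_m -> 'I_n -> nat) :
  `|genVdet X alpha|
    <= (m`!)%:R * (Mbound X alpha) ^+ (m.-1) * Bbound X alpha.
Proof.
case: m hm X alpha => [|[|m]] // _ X alpha.
rewrite /genVdet -det_tr -(det_sub_row _ (neq_lift ord0 ord0)).
apply: (norm_det_le _ (lift ord0 ord0)) => [r c r_neq | c];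
  rewrite !mxE ?(negbTE r_neq) ?eqxx.
- exact: le_Mbound.
- exact: le_Bbound.
Qed.
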